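(* Assume $|V|\ge 3$. Suppose the notion of strategic manipulation is weakened by removing requirement (a) (that the manipulated profile $(\vec s_{-C},\vec s'_C)$ be legal), keeping only requirement (b). Then for every $c\ge 1$ and $f\ge 1$ there is no $(c,f)$-resilient consensus protocol under this modified notion.
   Context: Model. There are $n$ agents $\Pi=\{1,\dots,n\}$ proceeding in synchronous rounds $1,2,\dots$. In each round every agent first chooses, for each agent $j$, a message to send to $j$ or no message; then it receives the messages sent to it in that round; then it updates its local state. Channels are reliable. A failure pattern $F$ is a subset of $\{(i,j,r): i,j\in\Pi, r\ge 1\}$, where $(i,j,r)\in F$ means that $i$'s round-$r$ message to $j$ would be delivered if sent; it must satisfy: if $(i,j,r)\notin F$ then $(i,j',r')\notin F$ for all $j'$ and all $r'>r$. Agent $i$ is correct if $(i,j,r)\in F$ for all $j,r$, and faulty otherwise; a faulty agent stops acting after it crashes. In a system with at most $f$ crash failures only failure patterns with at most $f$ faulty agents occur. $V$ is a finite set of proposal values; the private type $\theta_i$ of agent $i$ is a strict total order on $V$. A (deterministic) strategy $s_i$ maps $\theta_i$ to a function from (round $r$, messages received in rounds $1..r$) to (messages to send in round $r+1$, a decision in $V\cup\{\top\}$ or $\bot$ = no decision), $\top\notin V$; each agent decides at most once. A protocol is a profile $\vec s=(s_1,\dots,s_n)$; the run $R(F,\vec\theta,\vec s)$ is determined by $F$, $\vec\theta$, $\vec s$. Legal profile: for every admissible $F$ and every $\vec\theta$: Termination (every correct agent eventually decides), Uniform Agreement (no two agents decide differently), Validity (any decision is an element of $V$ that is the most preferred value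 of some agent). Utility of $i$: $0$ if $i$ crashes in $F$; if consensus holds with decision $d$, a positive value strictly increasing in $i$'s preference for $d$; $-\infty$ if consensus is violated. Colluders $C$ may use strategies depending on all colluders' types. Original definition: $C$ can strategically manipulate a legal $\vec s$ if there is $\vec s'_C$ with (a) $(\vec s_{-C},\vec s'_C)$ legal, and (b) some admissible $F$ and some $\vec\theta$ in which all members of $C$ have the same most preferred value, such that some $i\in C$ has strictly higher utility under $(\vec s_{-C},\vec s'_C)$ than under $\vec s$. A $(c,f)$-resilient consensus protocol is a legal profile that no group of size at most $c$ can strategically manipulate, in a system with at most $f$ crash failures. *)

(* Model of synchronous crash-prone message passing and
   rational consensus (Halpern-Vilaca style). Rounds are 0-based internally:
   code round k corresponds to the paper's round k+1. *)
From mathcomp Require Import all_boot all_order all_algebra.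

Set Implicit Arguments.
Unset Strict Implicit.
Unset Printing Implicit Defensive.

Import Order.TTheory GRing.Theory Num.Theory.
Local Open Scope ring_scope.

Record pref (V : finType) := Pref {
  prel : rel V;                       (* prel x y : x strictly preferred to y *)
  prel_irr : irreflexive prel;
  prel_trans : transitive prel;
  prel_total : forall x y, x != y -> prel x y || prel y x }.

Definition is_top (V : finType) (th : pref V) (v : V) : Prop :=
  forall w, w != v -> prel th v w.

Inductive decision (V : Type) := Decide of V | DecideTop.
Arguments DecideTop {V}.

Section Model.
Variables (n : nat) (M : Type) (V : finType).

(* one round's messages, indexed by the other agent (recipient when sending,
   sender when receiving); None = no message *)
Definition msgs := 'I_n -> option M.
(* output: messages to send next round, decision (None = bottom) *)
Definition out := (msgs * option (decision V))%type.
(* behaviour of an agent once its type is fixed: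
   (round r, messages received in rounds 1..r) |-> output *)
Definition actor := nat -> seq msgs -> out.
Definition strategy := pref V -> actor.
Definition profile := 'I_n -> strategy.

(* F i j k : i's message to j in (paper) round k+1 would be delivered *)
Definition fpattern := 'I_n -> 'I_n -> nat -> bool.

Definition valid_fp (F : fpattern) : Prop :=
  forall i j r, ~~ F i j r -> forall j' r', (r < r')%N -> ~~ F i j' r'.

Definition correct (F : fpattern) (i : 'I_n) : Prop := forall j r, F i j r.

Definition admissible (f : nat) (F : fpattern) : Prop :=
  valid_fp F /\
  exists S : {set 'I_n}, (#|S| <= f)%N /\ forall i, ~ correct F i -> i \in S.

Fixpoint hist (F : fpattern) (A : 'I_n -> actor) (k : nat) : 'I_n -> seq msgs :=
  match k with
  | 0 => fun _ => [::]
  | k'.+1 => fun i =>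
      let h := hist F A k' in
      rcons (h i) (fun j => if F j i k' then (A j k' (h j)).1 i else None)
  end.

Definition output (F : fpattern) (A : 'I_n -> actor) (k : nat) (i : 'I_n) : out :=
  A i k (hist F A k i).

(* i has not crashed in any round before (code) round k, so it still acts
   (computes its round-k messages and its decision) at step k *)
Definition alive (F : fpattern) (i : 'I_n) (k : nat) : Prop :=
  forall j k', (k' < k)%N -> F i j k'.

Definition decides (F : fpattern) (A : 'I_n -> actor) (i : 'I_n)
  (d : decision V) : Prop :=
  exists k, alive F i k /\ (output F A k i).2 = Some d /\
    forall k', (k' < k)%N -> (output F A k' i).2 = None.

Definition consensus (F : fpattern) (th : 'I_n -> pref V) (A : 'I_n -> actor) : Prop :=
  [/\ forall i, correct F i -> exists d, decides F A i d,
      forall i j d d', decides F A i d -> decides F A j d' -> d = d' &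
      forall i d, decides F A i d ->
        exists v, d = Decide v /\ exists j, is_top (th j) v].

Definition honest (s : profile) (th : 'I_n -> pref V) : 'I_n -> actor :=
  fun i => s i (th i).

Definition legal (f : nat) (s : profile) : Prop :=
  forall F th, admissible f F -> consensus F th (honest s th).

Inductive xutil (R : Type) := NegInf | Fin of R.

Definition xlt (R : numDomainType) (a b : xutil R) : bool :=
  match a, b with
  | NegInf, Fin _ => true
  | Fin x, Fin y => x < y
  | _, _ => false
  end.

Definition util_ok (R : numDomainType) (u : 'I_n -> pref V -> V -> R) : Prop :=
  (forall i th d, 0 < u i th d) /\
  (forall i th d d', prel th d d' -> u i th d' < u i th d).

Definition util_is (R : numDomainType) (u : 'I_n -> pref V -> V -> R)
  (F : fpattern) (th : 'I_n -> pref V) (A : 'I_n -> actor) (i : 'I_n)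
  (x : xutil R) : Prop :=
  (~ correct F i /\ x = Fin 0) \/
  (correct F i /\ consensus F th A /\
     exists d, decides F A i (Decide d) /\ x = Fin (u i (th i) d)) \/
  (correct F i /\ ~ consensus F th A /\ x = @NegInf R).

Definition gains (R : numDomainType) (u : 'I_n -> pref V -> V -> R)
  (F : fpattern) (th : 'I_n -> pref V) (i : 'I_n) (A' A : 'I_n -> actor) : Prop :=
  exists x' x, util_is u F th A' i x' /\ util_is u F th A i x /\ xlt x x'.

(* colluders' strategies may depend on all colluders' types *)
Definition cstrategy := 'I_n -> ('I_n -> pref V) -> actor.

Definition only_C (C : {set 'I_n}) (s' : cstrategy) : Prop :=
  forall i th th', (forall j, j \in C -> th j = th' j) ->
    forall r h, s' i th r h = s' i th' r h.

Definition deviate (s : profile) (C : {set 'I_n}) (s' : cstrategy)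
  (th : 'I_n -> pref V) : 'I_n -> actor :=
  fun i => if i \in C then s' i th else s i (th i).

(* weakened manipulation: requirement (a) (legality of the deviation) dropped *)
Definition weak_manipulable (R : numDomainType) (u : 'I_n -> pref V -> V -> R)
  (f : nat) (s : profile) (C : {set 'I_n}) : Prop :=
  exists s' : cstrategy, only_C C s' /\
  exists F th, admissible f F /\
    (exists v, forall j, j \in C -> is_top (th j) v) /\
    exists i, i \in C /\ gains u F th i (deviate s C s' th) (honest s th).

Definition weak_resilient (R : numDomainType) (u : 'I_n -> pref V -> V -> R)
  (c f : nat) (s : profile) : Prop :=
  legal f s /\ forall C : {set 'I_n}, (#|C| <= c)%N -> ~ weak_manipulable u f s C.

End Model.

(** Dropping the legality requirement lets a single agent deviate by replaying,
    message for message, how it would behave in some other run.  So in a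
    resilient protocol a correct agent [x] must decide the same value in any two
    admissible runs that differ only in the messages [x] receives: otherwise it
    profits by replaying the run in which it decides the value it prefers.

    Let agent [j] crash after sending its first [t] messages.  Consecutive values
    of [t] give runs differing in a single message, received either by a correct
    agent or by [j] itself, whose view nobody else sees; so the decision does not
    depend on [t].  For [t = 0] agent [j] is silent and its type is irrelevant;
    for large [t] the run coincides with the failure-free run until a correct
    agent decides.  Hence the failure-free decision does not depend on the type
    of [j], and then, changing one type at a time, on the types at all.  This
    contradicts Validity for two unanimous type profiles with different tops. *)

From mathcomp Require Import all_boot all_order all_algebra.
From mathcomp Require Import zify.
From Stdlib Require Import FunctionalExtensionality.

Set Implicit Arguments.
Unset Strict Implicit.
Unset Printing Implicit Defensive.

Lemma is_top_unique (V : finType) (th : pref V) (v w : V) :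
  is_top th v -> is_top th w -> v = w.
Proof.
move=> top_v top_w; case: (eqVneq v w) => // v_neq_w.
have wv := top_w v v_neq_w; have vw : prel th v w by apply: top_v; rewrite eq_sym.
by have := prel_trans wv vw; rewrite prel_irr.
Qed.

Lemma exists_top (V : finType) (th : pref V) (v0 : V) : exists v, is_top th v.
Proof.
have [v _ v_max] := @arg_maxnP V v0 predT (fun v => #|[pred w | prel th v w]|) isT.
exists v => w w_neq_v; case/orP: (prel_total th w_neq_v) => // wv.
have : #|[pred z | prel th v z]| < #|[pred z | prel th w z]|.
  apply/proper_card/properP; split.
    by apply/subsetP => z; rewrite !inE; apply: prel_trans wv.
  by exists v; rewrite !inE ?prel_irr.
by rewrite ltnNge [X in ~~ X](v_max w isT).
Qed.

Definition top_first_rank (V : finType) (a x : V) : nat :=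
  if x == a then 0 else (enum_rank x).+1.

Lemma top_first_rank_inj (V : finType) (a : V) : injective (top_first_rank a).
Proof.
move=> x y; rewrite /top_first_rank.
case: (eqVneq x a) => [->|_]; case: (eqVneq y a) => [->|_] //.
by case=> /val_inj /enum_rank_inj.
Qed.

Definition pref_top (V : finType) (a : V) : pref V.
Proof.
refine (@Pref V (fun x y => top_first_rank a x < top_first_rank a y) _ _ _).
- by move=> x; rewrite ltnn.
- by move=> x y z; apply: ltn_trans.
- move=> x y x_neq_y /=; rewrite -neq_ltn.
  by apply: contra x_neq_y => /eqP /top_first_rank_inj ->.
Defined.

Lemma pref_top_is_top (V : finType) (a : V) : is_top (pref_top a) a.
Proof. by move=> w w_neq_a; rewrite /= /top_first_rank eqxx (negbTE w_neq_a). Qed.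

Section Runs.
Variables (n : nat) (M : Type) (V : finType).
Implicit Types (F : fpattern n) (A B : 'I_n -> actor n M V).

Lemma output_replay F1 F2 A B (x : 'I_n) :
  (forall p q k, q != x -> F1 p q k = F2 p q k) ->
  (forall i, i != x -> B i = A i) ->
  (forall k h, B x k h = output F2 A k x) ->
  forall k p, output F1 B k p = output F2 A k p.
Proof.
move=> eqF eqB replay_x.
have eq_hist k y : y != x -> hist F1 B k y = hist F2 A k y.
  elim: k y => [|k IH] y y_neq_x //=.
  rewrite IH //; congr rcons; apply: functional_extensionality => p.
  rewrite eqF //; case: (eqVneq p x) => [->|p_neq_x]; first by rewrite replay_x.
  by rewrite eqB // IH.
move=> k p; rewrite /output; case: (eqVneq p x) => [->|p_neq_x].
  by rewrite replay_x.
by rewrite eqB // eq_hist.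
Qed.

Lemma hist_eq_prefix F1 F2 A K :
  (forall p q k, (k < K)%N -> F1 p q k = F2 p q k) ->
  forall k y, (k <= K)%N -> hist F1 A k y = hist F2 A k y.
Proof.
move=> eqF; elim=> [|k IH] y le_kK //=.
rewrite IH ?(ltnW le_kK) //; congr rcons; apply: functional_extensionality => p.
by rewrite eqF // IH // ltnW.
Qed.

Lemma hist_silent F A B (j : 'I_n) :
  (forall q k, F j q k = false) -> (forall i, i != j -> A i = B i) ->
  forall k y, hist F A k y = hist F B k y.
Proof.
move=> silent_j eqAB; elim=> [|k IH] y //=.
rewrite IH; congr rcons; apply: functional_extensionality => p.
case: (eqVneq p j) => [->|p_neq_j]; first by rewrite silent_j.
by rewrite eqAB // IH.
Qed.

Lemma hist_eq_but_self_message F1 F2 A (j : 'I_n) r :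
  (forall p q k, [|| p != j, q != j | k != r] -> F1 p q k = F2 p q k) ->
  (forall q k, q != j -> F2 j q k -> (k <= r)%N) ->
  forall k y, (y != j) || (k <= r)%N -> hist F1 A k y = hist F2 A k y.
Proof.
move=> eqF j_silent_after_r; elim=> [|k IH] y y_ok //=.
have y_ok' : (y != j) || (k <= r)%N.
  by case/orP: y_ok => [->//|lt_kr]; rewrite (ltnW lt_kr) orbT.
rewrite IH //; congr rcons; apply: functional_extensionality => p.
have -> : F1 p y k = F2 p y k.
  by apply: eqF; case/orP: y_ok => [->|lt_kr]; rewrite ?orbT // neq_ltn lt_kr !orbT.
case F2pyk: (F2 p y k) => //; rewrite IH //.
case: (eqVneq p j) => [eq_pj|//] /=; rewrite eq_pj in F2pyk.
by case/orP: y_ok => [y_neq_j|/ltnW //]; apply: j_silent_after_r F2pyk.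
Qed.

Lemma decides_output_eq F1 F2 A B y d :
  (forall k, output F1 B k y = output F2 A k y) ->
  (forall k, alive F1 y k -> alive F2 y k) ->
  decides F1 B y d -> decides F2 A y d.
Proof.
move=> eq_out alive12 [k [alive_k [dec_k undec]]]; exists k.
by split; [exact: alive12 | rewrite -eq_out; split=> // k' /undec; rewrite eq_out].
Qed.

Lemma decides_functional F A y d d' : decides F A y d -> decides F A y d' -> d = d'.
Proof.
move=> [k [_ [dec_k undec]]] [k' [_ [dec_k' undec']]].
case: (ltngtP k k') => [/undec'|/undec|eq_kk']; rewrite ?dec_k ?dec_k' //.
by move: dec_k'; rewrite -eq_kk' dec_k => -[].
Qed.

Lemma consensus_output_eq F1 F2 A B th :
  (forall k p, output F1 B k p = output F2 A k p) ->
  (forall y k, alive F1 y k <-> alive F2 y k) ->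
  (forall y, correct F1 y <-> correct F2 y) ->
  consensus F2 th A -> consensus F1 th B.
Proof.
move=> eq_out eq_alive eq_correct [term agree valid].
have dec12 y d : decides F1 B y d -> decides F2 A y d.
  by apply: decides_output_eq => k; [apply: eq_out | case: (eq_alive y k)].
have dec21 y d : decides F2 A y d -> decides F1 B y d.
  by apply: decides_output_eq => k; [rewrite eq_out | case: (eq_alive y k)].
split.
- by move=> i /eq_correct /term [d /dec21]; exists d.
- by move=> i j d d' /dec12 dec_i /dec12; apply: agree dec_i.
- by move=> i d /dec12; apply: valid.
Qed.

End Runs.

Definition no_failures (n : nat) : fpattern n := fun _ _ _ => true.
Arguments no_failures : clear implicits.

Lemma no_failures_admissible (n f : nat) : admissible f (no_failures n).
Proof.
split; first by [].
by exists set0; rewrite cards0; split=> // i not_correct_i; case: not_correct_i.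
Qed.

Lemma no_failures_correct (n : nat) (i : 'I_n) : correct (no_failures n) i.
Proof. by []. Qed.

Lemma exists_other_agent (n : nat) (j : 'I_n) : (2 <= n)%N -> exists i : 'I_n, i != j.
Proof.
move=> n_ge2; have [lt0n lt1n] : (0 < n)%N /\ (1 < n)%N by lia.
case: (eqVneq (Ordinal lt0n) j) => [eq0j|]; last by exists (Ordinal lt0n).
by exists (Ordinal lt1n); rewrite -eq0j.
Qed.

Section CrashAfter.
Variables (n : nat) (j : 'I_n).

Let n_gt0 : (0 < n)%N := leq_ltn_trans (leq0n j) (ltn_ord j).

(* Agent [j] sends its round-[k] message to [q] as its [(k * n + slot q)]-th
   message overall (to itself last in each round); [crash_after t] delivers
   exactly the first [t] of them. *)
Definition slot (q : 'I_n) : nat :=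
  if q == j then n.-1 else if (q < j)%N then nat_of_ord q else q.-1.

Definition crash_after (t : nat) : fpattern n :=
  fun p q k => if p == j then (k * n + slot q < t)%N else true.

Lemma slot_lt q : (slot q < n)%N.
Proof.
rewrite /slot; have := ltn_ord q; have := ltn_ord j.
case: (q == j); first lia.
by case: (q < j)%N; lia.
Qed.

Lemma slot_self : slot j = n.-1.
Proof. by rewrite /slot eqxx. Qed.

Lemma slot_lt_pred q : q != j -> (slot q < n.-1)%N.
Proof.
move=> q_neq_j; rewrite /slot (negbTE q_neq_j); have := ltn_ord q; have := ltn_ord j.
have : (q : nat) != j by []; case: (ltnP q j); lia.
Qed.

Lemma slot_inj : injective slot.
Proof.
move=> q q'; rewrite /slot -!(inj_eq val_inj) /= => eq_slot; apply: val_inj => /=.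
move: eq_slot; have := ltn_ord q; have := ltn_ord q'; have := ltn_ord j.
by case: (eqVneq (q : nat) j); case: (eqVneq (q' : nat) j);
  case: (ltnP q j); case: (ltnP q' j); lia.
Qed.

Lemma slot_surj m : (m < n)%N -> exists q, slot q = m.
Proof.
move=> lt_mn; case: (eqVneq m n.-1) => [->|m_neq]; first by exists j; rewrite slot_self.
have lt_jn := ltn_ord j; have lt_Smn : (m.+1 < n)%N by lia.
case: (ltnP m j) => [lt_mj|le_jm].
  exists (Ordinal lt_mn); rewrite /slot /= lt_mj.
  by have -> : (Ordinal lt_mn == j) = false by apply/eqP => /(congr1 val) /=; lia.
exists (Ordinal lt_Smn); rewrite /slot /=.
have -> : (Ordinal lt_Smn == j) = false by apply/eqP => /(congr1 val) /=; lia.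
by have -> : (m.+1 < j)%N = false by lia.
Qed.

Lemma crash_after_decompose t : exists r x, t = (r * n + slot x)%N.
Proof.
have [x slot_x] := slot_surj (ltn_pmod t n_gt0).
by exists (t %/ n), x; rewrite slot_x -divn_eq.
Qed.

Lemma crash_after_valid t : valid_fp (crash_after t).
Proof.
move=> p q r; rewrite /crash_after; case: (p == j) => // late q' r' lt_rr'.
have := slot_lt q; have := slot_lt q'.
have : (r.+1 * n <= r' * n)%N by rewrite leq_mul2r lt_rr' orbT.
by move: late; rewrite mulSn; lia.
Qed.

Lemma crash_after_correct t i : i != j -> correct (crash_after t) i.
Proof. by move=> i_neq_j q k; rewrite /crash_after (negbTE i_neq_j). Qed.

Lemma crash_after_correctE t i : correct (crash_after t) i <-> i != j.
Proof.
split=> [correct_i|]; last exact: crash_after_correct.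
apply: contraPneq correct_i => -> /(_ j t); rewrite /crash_after eqxx slot_self.
have : (t <= t * n)%N by rewrite leq_pmulr.
by have := ltn_ord j; lia.
Qed.

Lemma crash_after_admissible f t : (1 <= f)%N -> admissible f (crash_after t).
Proof.
move=> f_gt0; split; first exact: crash_after_valid.
exists [set j]; rewrite cards1; split=> // i not_correct_i.
rewrite inE; apply: contraT => i_neq_j.
by case: not_correct_i; apply: crash_after_correct.
Qed.

Lemma crash_after_alive_self t k : alive (crash_after t) j k <-> (k * n <= t)%N.
Proof.
split.
- case: k => [|k] alive_k; first by rewrite mul0n.
  move: (alive_k j k (ltnSn k)); rewrite /crash_after eqxx slot_self mulSn.
  by have := ltn_ord j; lia.
- move=> le_kn_t q k' lt_k'k; rewrite /crash_after eqxx.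
  have := slot_lt q; have : (k'.+1 * n <= k * n)%N by rewrite leq_mul2r lt_k'k orbT.
  by rewrite mulSn; lia.
Qed.

Lemma crash_after_alive t i k : i != j -> alive (crash_after t) i k.
Proof. by move=> i_neq_j q k' _; rewrite /crash_after (negbTE i_neq_j). Qed.

Lemma crash_after_round K q k : crash_after (K * n) j q k = (k < K)%N.
Proof.
rewrite /crash_after eqxx; have := slot_lt q.
case: (ltnP k K) => [lt_kK|le_Kk] lt_slot.
  have : (k.+1 * n <= K * n)%N by rewrite leq_mul2r lt_kK orbT.
  by rewrite mulSn; lia.
have : (K * n <= k * n)%N by rewrite leq_mul2r le_Kk orbT.
by lia.
Qed.

Lemma crash_after_alive_succ t r x : t = (r * n + slot x)%N -> x != j ->
  forall i k, alive (crash_after t) i k <-> alive (crash_after t.+1) i k.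
Proof.
move=> def_t x_neq_j i k; case: (eqVneq i j) => [->|i_neq_j]; last first.
  by split=> _; apply: crash_after_alive.
rewrite !crash_after_alive_self; split=> [|le_kn_St]; first lia.
have lt_slot := slot_lt_pred x_neq_j; have lt0n := n_gt0.
have : (k * n < r.+1 * n)%N by rewrite mulSn; lia.
by rewrite ltn_pmul2r // ltnS -(leq_pmul2r n_gt0); lia.
Qed.

Lemma crash_after_succ t r x : t = (r * n + slot x)%N ->
  forall p q k, (q != x) || (k != r) -> crash_after t p q k = crash_after t.+1 p q k.
Proof.
move=> def_t p q k other_msg; rewrite /crash_after; case: (p == j) => //.
rewrite [in RHS]ltnS [in RHS]leq_eqVlt; case: eqP => //= eq_t.
have eq_slot : slot q = slot x.
  by have := congr1 (modn^~ n) eq_t; rewrite def_t /= !modnMDl !modn_small ?slot_lt.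
move: other_msg eq_t; rewrite (slot_inj eq_slot) eqxx def_t /=.
by move=> k_neq_r /addIn /eqP; rewrite eqn_pmul2r // (negbTE k_neq_r).
Qed.

End CrashAfter.

Section WeakResilience.
Variables (n : nat) (M : Type) (V : finType) (f : nat) (s : profile n M V).
Implicit Types (F : fpattern n) (th : 'I_n -> pref V).

Definition decision_in F th (d : V) : Prop :=
  exists y, correct F y /\ decides F (honest s th) y (Decide d).

Hypothesis s_legal : legal f s.

Lemma decides_decision_in F th x d :
  admissible f F -> correct F x -> decision_in F th d ->
  decides F (honest s th) x (Decide d).
Proof.
move=> adm_F correct_x [y [_ dec_y]]; have [term agree _] := s_legal th adm_F.
by have [d0 dec_x] := term x correct_x; rewrite -(agree _ _ _ _ dec_x dec_y).
Qed.

Lemma exists_decision_in F th x :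
  admissible f F -> correct F x -> exists d, decision_in F th d.
Proof.
move=> adm_F correct_x; have [term _ valid] := s_legal th adm_F.
have [d0 dec_x] := term x correct_x; have [v [eq_d0 _]] := valid _ _ dec_x.
by exists v, x; rewrite -eq_d0.
Qed.

Lemma decision_in_unique F th d d' :
  admissible f F -> decision_in F th d -> decision_in F th d' -> d = d'.
Proof.
move=> adm_F [y [_ dec_y]] [z [_ dec_z]]; have [_ agree _] := s_legal th adm_F.
by case: (agree _ _ _ _ dec_y dec_z).
Qed.

Lemma decision_in_valid F th d :
  admissible f F -> decision_in F th d -> exists j, is_top (th j) d.
Proof.
move=> adm_F [y [_ dec_y]]; have [_ _ valid] := s_legal th adm_F.
by have [v [[->] top_v]] := valid _ _ dec_y.
Qed.

Lemma decision_in_eq_of_view F1 F2 th1 th2 i d1 d2 :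
  admissible f F1 -> admissible f F2 -> correct F1 i -> correct F2 i ->
  (forall k, output F1 (honest s th1) k i = output F2 (honest s th2) k i) ->
  decision_in F1 th1 d1 -> decision_in F2 th2 d2 -> d1 = d2.
Proof.
move=> adm1 adm2 correct1 correct2 eq_out /(decides_decision_in adm1 correct1) dec1.
move=> /(decides_decision_in adm2 correct2) dec2.
suff /(decides_functional dec1) [] : decides F1 (honest s th1) i (Decide d2) by [].
by apply: decides_output_eq dec2 => k //; move=> _ q k' _; apply: correct1.
Qed.

Variables (c : nat) (R : realFieldType) (u : 'I_n -> pref V -> V -> R).
Hypotheses (n_ge2 : (2 <= n)%N) (f_gt0 : (1 <= f)%N) (c_gt0 : (1 <= c)%N).
Hypothesis u_ok : util_ok u.
Hypothesis s_unmanipulable :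
  forall C : {set 'I_n}, (#|C| <= c)%N -> ~ weak_manipulable u f s C.

(* The deviation of [x] ignores what it receives and replays its outputs from
   the run on [F2]; since [F1] and [F2] differ only in what [x] receives, the
   other agents cannot tell the two runs apart. *)
Lemma no_gain_by_replay x F1 F2 th d1 d2 :
  admissible f F1 -> admissible f F2 ->
  (forall p q k, q != x -> F1 p q k = F2 p q k) ->
  (forall y k, alive F1 y k <-> alive F2 y k) ->
  (forall y, correct F1 y <-> correct F2 y) ->
  correct F1 x ->
  decides F1 (honest s th) x (Decide d1) -> decides F2 (honest s th) x (Decide d2) ->
  ~ prel (th x) d2 d1.
Proof.
move=> adm1 adm2 eqF eq_alive eq_correct correct_x dec1 dec2 pref_d2.
apply: (s_unmanipulable (C := [set x])); first by rewrite cards1.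
pose replay : actor n M V := fun k _ => output F2 (honest s th) k x.
exists (fun _ _ => replay); split; first by [].
exists F1, th; split=> //; split.
  have [v top_v] := exists_top (th x) d1.
  by exists v => j; rewrite inE => /eqP ->.
exists x; split; first by rewrite inE.
set B := deviate s [set x] (fun _ _ => replay) th.
have eq_out : forall k p, output F1 B k p = output F2 (honest s th) k p.
  apply: output_replay eqF _ _ => [i i_neq_x|k h].
    by rewrite /B /deviate inE (negbTE i_neq_x).
  by rewrite /B /deviate inE eqxx.
have cons_B := consensus_output_eq eq_out eq_alive eq_correct (s_legal th adm2).
exists (Fin (u x (th x) d2)), (Fin (u x (th x) d1)); split; last split.
- right; left; split=> //; split=> //; exists d2; split=> //.
  by apply: decides_output_eq dec2 => k; [rewrite eq_out | case: (eq_alive x k)].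
- by right; left; split=> //; split; [exact: s_legal | exists d1].
- exact: (proj2 u_ok).
Qed.

Lemma decision_in_eq_of_one_receiver x F1 F2 th d1 d2 :
  admissible f F1 -> admissible f F2 -> correct F1 x ->
  (forall p q k, q != x -> F1 p q k = F2 p q k) ->
  (forall y k, alive F1 y k <-> alive F2 y k) ->
  (forall y, correct F1 y <-> correct F2 y) ->
  decision_in F1 th d1 -> decision_in F2 th d2 -> d1 = d2.
Proof.
move=> adm1 adm2 correct1 eqF eq_alive eq_correct.
have correct2 := proj1 (eq_correct x) correct1.
move=> /(decides_decision_in adm1 correct1) dec1 /(decides_decision_in adm2 correct2) dec2.
case: (eqVneq d1 d2) => // d1_neq_d2; exfalso.
case/orP: (prel_total (th x) d1_neq_d2) => [pref_d1|pref_d2].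
- have eqF' p q k : q != x -> F2 p q k = F1 p q k by move=> ?; rewrite eqF.
  apply: (no_gain_by_replay adm2 adm1 eqF' _ _ correct2 dec2 dec1 pref_d1).
    by move=> y k; rewrite eq_alive.
  by move=> y; rewrite eq_correct.
- exact: (no_gain_by_replay adm1 adm2 eqF eq_alive eq_correct correct1 dec1 dec2 pref_d2).
Qed.

Lemma decision_crash_after_succ j th t d1 d2 :
  decision_in (crash_after j t) th d1 -> decision_in (crash_after j t.+1) th d2 -> d1 = d2.
Proof.
have [r [x def_t]] := crash_after_decompose j t.
have adm1 := crash_after_admissible j t f_gt0.
have adm2 := crash_after_admissible j t.+1 f_gt0.
have eqF := crash_after_succ def_t.
case: (eqVneq x j) => [eq_xj|x_neq_j]; last first.
  apply: (decision_in_eq_of_one_receiver adm1 adm2 (crash_after_correct t x_neq_j)).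
  - by move=> p q k q_neq_x; apply: eqF; rewrite q_neq_x.
  - exact: crash_after_alive_succ def_t x_neq_j.
  - by move=> y; rewrite !crash_after_correctE.
(* The differing message is [j]'s message to itself; [j] sends nothing afterwards. *)
move: def_t eqF; rewrite eq_xj slot_self => def_t eqF.
have [i i_neq_j] := exists_other_agent j n_ge2.
have eq_hist k : hist (crash_after j t) (honest s th) k i
               = hist (crash_after j t.+1) (honest s th) k i.
  apply: (hist_eq_but_self_message (j := j) (r := r) _ _); last by rewrite i_neq_j.
  - move=> p q k'; case: (eqVneq p j) => [->|p_neq_j] /= other; first exact: eqF.
    by rewrite /crash_after (negbTE p_neq_j).
  - move=> q k' _; rewrite (_ : t.+1 = r.+1 * n) ?crash_after_round //.
    by rewrite def_t mulSn; lia.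
apply: (decision_in_eq_of_view adm1 adm2 (crash_after_correct t i_neq_j)
          (crash_after_correct t.+1 i_neq_j)) => k.
by rewrite /output eq_hist.
Qed.

Lemma decision_crash_after_const j th t d d' :
  decision_in (crash_after j 0) th d -> decision_in (crash_after j t) th d' -> d = d'.
Proof.
move=> dec0; elim: t d' => [|t IH] d'.
  exact: decision_in_unique (crash_after_admissible j 0 f_gt0) dec0.
have [i i_neq_j] := exists_other_agent j n_ge2.
have [e dec_t] := exists_decision_in th (crash_after_admissible j t f_gt0)
                    (crash_after_correct t i_neq_j).
by rewrite (IH _ dec_t); apply: decision_crash_after_succ.
Qed.

Lemma decision_silent_indep j th th' d d' :
  (forall y, y != j -> th y = th' y) ->
  decision_in (crash_after j 0) th d -> decision_in (crash_after j 0) th' d' -> d = d'.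
Proof.
move=> eq_th; have [i i_neq_j] := exists_other_agent j n_ge2.
have adm := crash_after_admissible j 0 f_gt0; have correct_i := crash_after_correct 0 i_neq_j.
have eq_honest y : y != j -> honest s th y = honest s th' y.
  by rewrite /honest => /eq_th ->.
apply: (decision_in_eq_of_view adm adm correct_i correct_i) => k.
rewrite /output eq_honest // (hist_silent _ eq_honest) // => q k'.
by rewrite /crash_after eqxx.
Qed.

Lemma decision_no_failures_crash_late j th d :
  decision_in (no_failures n) th d -> exists t, decision_in (crash_after j t) th d.
Proof.
move=> dec; have [i i_neq_j] := exists_other_agent j n_ge2.
have [k [_ [dec_k undec]]] :=
  decides_decision_in (no_failures_admissible n f)
    (no_failures_correct i) dec.
have eq_hist k' : (k' <= k)%N ->
    hist (crash_after j (k * n)) (honest s th) k' i = hist (no_failures n) (honest s th) k' i.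
  apply: hist_eq_prefix => p q k'' lt_k''k.
  by case: (eqVneq p j) => [->|p_neq_j]; rewrite ?crash_after_round // /crash_after (negbTE p_neq_j).
exists (k * n), i; split; first exact: crash_after_correct.
exists k; split; first exact: crash_after_alive.
split=> [|k' lt_k'k]; rewrite /output eq_hist; [exact: dec_k | exact: leqnn | |].
- exact: undec.
- exact: ltnW.
Qed.

Lemma decision_no_failures_indep1 j th th' d d' :
  (forall y, y != j -> th y = th' y) ->
  decision_in (no_failures n) th d -> decision_in (no_failures n) th' d' -> d = d'.
Proof.
move=> eq_th /(decision_no_failures_crash_late j) [t dec_t].
move=> /(decision_no_failures_crash_late j) [t' dec_t'].
have [i i_neq_j] := exists_other_agent j n_ge2.
have adm0 := crash_after_admissible j 0 f_gt0.
have [e dec0] := exists_decision_in th adm0 (crash_after_correct 0 i_neq_j).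
have [e' dec0'] := exists_decision_in th' adm0 (crash_after_correct 0 i_neq_j).
rewrite -(decision_crash_after_const dec0 dec_t) -(decision_crash_after_const dec0' dec_t').
exact: decision_silent_indep eq_th dec0 dec0'.
Qed.

Lemma decision_no_failures_indep th th' d d' :
  decision_in (no_failures n) th d -> decision_in (no_failures n) th' d' -> d = d'.
Proof.
move=> dec dec'.
pose mix m (y : 'I_n) := if (y < m)%N then th' y else th y.
suff mix_dec m e : (m <= n)%N -> decision_in (no_failures n) (mix m) e -> d = e.
  apply: (mix_dec n) => //; congr decision_in: dec'.
  by apply: functional_extensionality => y; rewrite /mix ltn_ord.
elim: m e => [|m IH] e le_mn dec_e.
  exact: decision_in_unique (no_failures_admissible n f) dec dec_e.
have [e0 dec_e0] := exists_decision_in (mix m) (no_failures_admissible n f)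
                      (no_failures_correct (Ordinal le_mn)).
rewrite (IH _ (ltnW le_mn) dec_e0).
apply: (decision_no_failures_indep1 (j := Ordinal le_mn)) dec_e0 dec_e => y y_neq_m.
have {}y_neq_m : (y == m :> nat) = false by apply/negbTE; apply: contra y_neq_m => /eqP eq_ym; apply/eqP/val_inj.
by rewrite /mix [in RHS]ltnS [in RHS]leq_eqVlt y_neq_m.
Qed.

End WeakResilience.

Theorem proposition2 (V : finType) (n c f : nat) (M : Type)
  (R : realFieldType) (u : 'I_n -> pref V -> V -> R) :
  (3 <= #|V|)%N -> (2 <= n)%N -> (1 <= c)%N -> (1 <= f)%N ->
  util_ok u ->
  forall s : profile n M V, ~ weak_resilient u c f s.
Proof.
move=> V_ge3 n_ge2 c_gt0 f_gt0 u_ok s [s_legal s_unmanipulable].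
have [a [b [_ _ a_neq_b]]] := card_gt1P (ltnW V_ge3).
have adm := no_failures_admissible n f.
have agent0 : 'I_n := Ordinal (ltnW n_ge2).
have unanimous_decision v : exists2 d, decision_in s (no_failures n) (fun=> pref_top v) d & d = v.
  have [d dec] := exists_decision_in s_legal (fun=> pref_top v) adm
                    (no_failures_correct agent0).
  exists d; first exact: dec.
  have [_ top_d] := decision_in_valid s_legal adm dec.
  by apply: (is_top_unique top_d); apply: pref_top_is_top.
move: a_neq_b; have [da dec_a <-] := unanimous_decision a.
have [db dec_b <-] := unanimous_decision b.
apply/negP/negPn/eqP.
exact: (decision_no_failures_indep s_legal n_ge2 f_gt0 c_gt0 u_ok s_unmanipulable dec_a dec_b).
Qed.
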